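(* Let $(U,Y_U,\mathbf 1_U)$ and $(V,Y_V,\mathbf 1_V)$ be $\hbar$-adic nonlocal vertex algebras, and let $S$ be a $\mathbb{C}[[\hbar]]$-submodule of $U$ such that $U$ is generated by $S$. Assume there is a $U$-module structure $Y_V^U$ on $V$ such that $Y_V^U(u,z)\mathbf 1_V\in V[[z]]$ for all $u\in U$. Suppose $\psi^0:S\to V$ is a $\mathbb{C}[[\hbar]]$-module map with $Y_V^U(s,z)=Y_V(\psi^0(s),z)$ for all $s\in S$. Then there is a homomorphism of $\hbar$-adic nonlocal vertex algebras $\psi:U\to V$ with $\psi(s)=\psi^0(s)$ for all $s\in S$.
   Context: Let $\hbar$ be a formal variable. A $\mathbb{C}[[\hbar]]$-module is topologically free if it equals $W_0[[\hbar]]$ for a vector space $W_0$. For topologically free $W=W_0[[\hbar]]$ let $\mathcal{E}_\hbar(W)=\mathrm{Hom}_{\mathbb{C}[[\hbar]]}(W,W_0((z))[[\hbar]])$, and let $\pi_n$ denote reduction modulo $\hbar^n$. A sequence $(a_1(z),\dots,a_r(z))$ in $\mathcal{E}_\hbar(W)$ is $\hbar$-adically compatible if for each $n\ge1$ there is $m\ge0$ with $\prod_{i<j}(z_i-z_j)^m\pi_n(a_1(z_1))\cdots\pi_n(a_r(z_r))\in\mathrm{Hom}(W/\hbar^nW,(W/\hbar^nW)((z_1,\dots,z_r)))$. For such a pair $(a(z),b(z))$, with $k_n$ chosen so that $(z_1-z)^{k_n}\pi_n(a(z_1))\pi_n(b(z))\in \mathrm{Hom}(W/\hbar^nW,(W/\hbar^nW)((z_1,z)))$,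 $Y_{\mathcal E}(a(z),z_0)b(z)$ is the element of $\mathcal{E}_\hbar(W)[[z_0^{\pm1}]]$ whose reduction mod $\hbar^n$ is $z_0^{-k_n}\big((z_1-z)^{k_n}\pi_n(a(z_1))\pi_n(b(z))\big)|_{z_1=z+z_0}$ for all $n$. An $\hbar$-adic nonlocal vertex algebra is a topologically free $V$ with $\mathbf{1}\in V$ and $\mathbb{C}[[\hbar]]$-linear $Y(\cdot,z):V\to\mathcal{E}_\hbar(V)$ such that $Y(\mathbf 1,z)=\mathrm{id}$, $Y(v,z)\mathbf 1\in V[[z]]$, $\lim_{z\to0}Y(v,z)\mathbf 1=v$, $\{Y(u,z)\}_{u\in V}$ is $\hbar$-adically compatible and $Y_{\mathcal E}(Y(u,z),z_0)Y(v,z)=Y(Y(u,z_0)v,z)$. A $V$-module is a topologically free $W$ with $\mathbb{C}[[\hbar]]$-linear $Y_W:V\to\mathcal{E}_\hbar(W)$, $Y_W(\mathbf 1,z)=1_W$, $\{Y_W(u,z)\}$ $\hbar$-adically compatible, and $Y_{\mathcal E}(Y_W(u,z),z_0)Y_W(v,z)=Y_W(Y(u,z_0)v,z)$. A homomorphism $\psi:U\to V$ of $\hbar$-adic nonlocal vertex algebras is a $\mathbb{C}[[\hbar]]$-linear map with $\psi(\mathbf 1_U)=\mathbf 1_V$ and $\psi(Y_U(u,z)v)=Y_V(\psi(u),z)\psi(v)$. For a $\mathbb{C}[[\hbar]]$-submodule $U'$, $[U']=\{v:\hbar^nv\in U'\text{ for some }n\}$ and $\overline{U'}$ is its $\hbar$-adic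 closure. $U$ is generated by a subset $S$ if the only closed subspace $U'\ni\mathbf 1_U$ containing $S$, closed under all products $u_mv$ and with $[U']=U'$, is $U$ itself. *)

From mathcomp Require Import all_boot all_algebra.
From mathcomp.real_closed Require Import complex.
From mathcomp Require Import Rstruct.
From Stdlib Require Rdefinitions.

Set Implicit Arguments.
Unset Strict Implicit.
Unset Printing Implicit Defensive.

Import GRing.Theory Num.Theory.
Local Open Scope ring_scope.

Definition CC : fieldType := (Rdefinitions.R)[i].

Section Defs.
Variable W0 : lmodType CC.

(* W = W0[[hbar]] : an element is its sequence of hbar-coefficients. *)
Definition hs := nat -> W0.

(* the C[[hbar]]-action on W0[[hbar]] (a : C[[hbar]] as its coefficients) *)
Definition hsc (a : nat -> CC) (w : hs) : hs :=
  fun j => \sum_(i < j.+1) a i *: w (j - i)%N.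

Definition hadd (w w' : hs) : hs := fun j => w j + w' j.

Definition hpow (n : nat) : nat -> CC := fun i => (i == n)%:R.

(* An operator W -> W0((z))[[hbar]] (candidate element of E_hbar(W)):
   f w j p = coefficient of hbar^j z^p in f w.                               *)
Definition eop := hs -> nat -> int -> W0.

Definition in_Eh (f : eop) : Prop :=
  (forall p, forall u v j, f (hadd u v) j p = f u j p + f v j p) /\
  (forall p, forall a u j, f (hsc a u) j p = hsc a (fun i => f u i p) j) /\
  (forall w j, exists N : int, forall p, p < N -> f w j p = 0).

(* Multivariable series: coefficient of hbar^j z_1^(ps_1) ... z_r^(ps_r). *)
Definition mser := nat -> seq int -> W0.

(* the product a_1(z_1) ... a_r(z_r) applied to w *)
Fixpoint opprod (s : seq eop) (w : hs) : mser :=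
  match s with
  | [::] => fun j _ => w j
  | a :: s' => fun j ps => a (fun i => opprod s' w i (behead ps)) j (head 0 ps)
  end.

(* multiplication by (z_i - z_k) *)
Definition decr (i : nat) (ps : seq int) := set_nth 0 ps i (nth 0 ps i - 1).
Definition mulzd (i k : nat) (X : mser) : mser :=
  fun j ps => X j (decr i ps) - X j (decr k ps).

(* multiplication by prod_{i<k<r} (z_i - z_k)^m *)
Definition mulvdm (r m : nat) (X : mser) : mser :=
  foldr (fun ik Y => iter m (mulzd ik.1 ik.2) Y) X
        [seq ik <- [seq (i, k) | i <- iota 0 r, k <- iota 0 r] | (ik.1 < ik.2)%N].

(* F (a family of r-variable series indexed by w in W) lies, modulo hbar^n,
   in Hom(W/hbar^n W, (W/hbar^n W)((z_1,...,z_r))). *)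
Definition laurentm (r n : nat) (F : hs -> mser) : Prop :=
  forall w, exists N : int, forall (j : nat) (ps : seq int),
    (j < n)%N -> size ps = r -> has (fun p => p < N) ps -> F w j ps = 0.

Definition hcompatible (s : seq eop) : Prop :=
  forall n : nat, exists m : nat,
    laurentm (size s) n (fun w => mulvdm (size s) m (opprod s w)).

Definition hcompatible_fam (T : Type) (Y : T -> eop) : Prop :=
  forall us : seq T, hcompatible (map Y us).

Definition admissible (a b : eop) (n k : nat) : Prop :=
  laurentm 2 n (fun w => mulvdm 2 k (opprod [:: a; b] w)).

Definition lbound2 (n : nat) (N : int) (X : mser) : Prop :=
  forall (j : nat) (ps : seq int),
    (j < n)%N -> size ps = 2%N -> has (fun p => p < N) ps -> X j ps = 0.

Definition binc (p : int) (i : nat) : CC :=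
  (\prod_(l < i) (p - l%:Z)%:~R) / (i`!)%:R.

(* Coefficient of hbar^j z0^t z^s in z0^(-k) X(z+z0, z), where X is a
   two-variable series in W0((z1,z)) (mod hbar^n) with lower bound N;
   (z+z0)^p is expanded in nonnegative powers of z0.  Terms outside
   N <= p <= s+i-N vanish, so the sum below is the full (finite) sum.    *)
Definition subst_coef (N : int) (k : nat) (X : mser) (j : nat) (t s : int) : W0 :=
  if t + k%:Z < 0 then 0 else
  let i := absz (t + k%:Z) in
  \sum_(l < (absz (s + i%:Z - 2 * N)%R).+1)
     binc (N + l%:Z) i *: X j [:: N + l%:Z; s + i%:Z - N - l%:Z].

End Defs.

Arguments hs W0 : clear implicits.
Arguments eop W0 : clear implicits.

(* Y_E(Y_W(u,z),z0) Y_W(v,z) = Y_W(Y(u,z0)v, z), checked modulo every hbar^n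
   with any admissible k_n (all admissible choices give the same value). *)
Definition assoc_ax (V0 W0 : lmodType CC) (Y : hs V0 -> eop V0)
    (YW : hs V0 -> eop W0) : Prop :=
  forall (u v : hs V0) (n k : nat), admissible (YW u) (YW v) n k ->
  forall (w : hs W0) (N : int),
    lbound2 n N (mulvdm 2 k (opprod [:: YW u; YW v] w)) ->
  forall (j : nat) (t s : int), (j < n)%N ->
    YW (fun i => Y u v i t) w j s =
    subst_coef N k (mulvdm 2 k (opprod [:: YW u; YW v] w)) j t s.

Definition Ylinear (V0 W0 : lmodType CC) (Y : hs V0 -> eop W0) : Prop :=
  (forall u, in_Eh (Y u)) /\
  (forall u u' w j p, Y (hadd u u') w j p = Y u w j p + Y u' w j p) /\
  (forall a u w j p, Y (hsc a u) w j p = hsc a (fun i => Y u w i p) j).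

Definition is_hNVA (V0 : lmodType CC) (Y : hs V0 -> eop V0) (one : hs V0) : Prop :=
  [/\ Ylinear Y /\
      (forall v j p, Y one v j p = if p == 0 then v j else 0),
      (forall v j p, p < 0 -> Y v one j p = 0),
      (forall v j, Y v one j 0 = v j),
      hcompatible_fam Y &
      assoc_ax Y Y].

Definition is_hmodule (V0 W0 : lmodType CC) (Y : hs V0 -> eop V0) (one : hs V0)
    (YW : hs V0 -> eop W0) : Prop :=
  [/\ Ylinear YW,
      (forall w j p, YW one w j p = if p == 0 then w j else 0),
      hcompatible_fam YW &
      assoc_ax Y YW].

Definition hlinear (U0 V0 : lmodType CC) (f : hs U0 -> hs V0) : Prop :=
  (forall u u' j, f (hadd u u') j = f u j + f u' j) /\
  (forall a u j, f (hsc a u) j = hsc a (f u) j).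

Definition is_hNVA_hom (U0 V0 : lmodType CC) (YU : hs U0 -> eop U0) (oneU : hs U0)
    (YV : hs V0 -> eop V0) (oneV : hs V0) (psi : hs U0 -> hs V0) : Prop :=
  [/\ hlinear psi,
      (forall j, psi oneU j = oneV j) &
      (forall u v j p, psi (fun i => YU u v i p) j = YV (psi u) (psi v) j p)].

Definition hsubmod (U0 : lmodType CC) (P : hs U0 -> Prop) : Prop :=
  [/\ P (fun _ => 0),
      (forall u u', P u -> P u' -> P (hadd u u')) &
      (forall a u, P u -> P (hsc a u))].

Definition hclosed (U0 : lmodType CC) (P : hs U0 -> Prop) : Prop :=
  forall v, (forall n : nat, exists w, P w /\ forall j, (j < n)%N -> w j = v j) -> P v.

Definition hsaturated (U0 : lmodType CC) (P : hs U0 -> Prop) : Prop :=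
  forall v (n : nat), P (hsc (hpow n) v) -> P v.

Definition nprod (U0 : lmodType CC) (Y : hs U0 -> eop U0) (u : hs U0) (m : int)
    (v : hs U0) : hs U0 := fun j => Y u v j (- m - 1).

Definition hgenerated (U0 : lmodType CC) (Y : hs U0 -> eop U0) (one : hs U0)
    (S : hs U0 -> Prop) : Prop :=
  forall P : hs U0 -> Prop,
    hsubmod P -> hclosed P -> hsaturated P -> P one ->
    (forall s, S s -> P s) ->
    (forall u v (m : int), P u -> P v -> P (nprod Y u m v)) ->
    forall u, P u.

(* The candidate homomorphism is psi(u) = Y_V^U(u,z)1_V at z^0.  The set of
   u with Y_V^U(u,z) = Y_V(psi u, z) contains 1_U and S, is a closed,
   saturated submodule, and is closed under all products u_m v: the
   associativity of the module V over U and of V over itself computes both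
   sides of Y(u_m v, z) from the same pair of operators.  Since S generates
   U this set is all of U, and evaluating Y_V(psi(u_m v), z)1_V at z^0 then
   shows that psi preserves products. *)
From mathcomp Require Import all_boot all_algebra.
From Stdlib Require Import FunctionalExtensionality.

Set Implicit Arguments.
Unset Strict Implicit.
Unset Printing Implicit Defensive.

Local Open Scope ring_scope.
Import GRing.Theory.

Lemma eop_ext (W0 : lmodType CC) (f g : eop W0) :
  (forall w j p, f w j p = g w j p) -> f = g.
Proof.
move=> fg; do 3![apply: functional_extensionality => ?].
exact: fg.
Qed.

Lemma hsc0 (W0 : lmodType CC) (f : hs W0) : hsc (fun _ => 0) f = fun _ => 0.
Proof.
by apply: functional_extensionality => j; rewrite /hsc big1 // => i _; rewrite scale0r.
Qed.

Lemma hsc_hpow (W0 : lmodType CC) (f : hs W0) n j :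
  hsc (hpow n) f j = if (n <= j)%N then f (j - n)%N else 0.
Proof.
rewrite /hsc /hpow; case: leqP => [le_nj | lt_jn].
- rewrite (bigD1 (Ordinal (le_nj : (n < j.+1)%N))) //= eqxx scale1r.
  rewrite big1 ?addr0 // => i /negPf ne_in.
  by rewrite (_ : (nat_of_ord i == n) = false) ?scale0r // -ne_in -val_eqE.
- rewrite big1 // => i _.
  by rewrite ltn_eqF ?scale0r // (leq_trans (ltn_ord i) lt_jn).
Qed.

Section YlinearTheory.
Variables (V0 W0 : lmodType CC) (Y : hs V0 -> eop W0).
Hypothesis Ylin : Ylinear Y.

Lemma Ylinear0 w j p : Y (fun _ => 0) w j p = 0.
Proof.
case: Ylin => [_ [_ Ysc]].
by rewrite -(hsc0 (fun _ : nat => 0 : V0)) Ysc hsc0.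
Qed.

Lemma Ylinear_vanish_mod u w n j p :
  (forall i, (i < n)%N -> u i = 0) -> (j < n)%N -> Y u w j p = 0.
Proof.
case: Ylin => [_ [_ Ysc]] u_mod lt_jn.
have -> : u = hsc (hpow n) (fun i => u (i + n)%N).
  apply: functional_extensionality => i; rewrite hsc_hpow.
  by case: leqP => [/subnK -> | /u_mod].
by rewrite Ysc hsc_hpow leqNgt lt_jn.
Qed.

Lemma Ylinear_congr_mod u u' w n j p :
  (forall i, (i < n)%N -> u i = u' i) -> (j < n)%N -> Y u w j p = Y u' w j p.
Proof.
case: (Ylin) => [_ [Yadd _]] uu' lt_jn.
have -> : u = hadd u' (fun i => u i - u' i).
  by apply: functional_extensionality => i; rewrite /hadd addrC subrK.
rewrite Yadd (@Ylinear_vanish_mod (fun i => u i - u' i) w n) ?addr0 // => i /uu' ->.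
exact: subrr.
Qed.

End YlinearTheory.

Lemma assoc_ax_transport (U0 V0 W0 : lmodType CC)
    (YU : hs U0 -> eop U0) (YW : hs U0 -> eop W0)
    (YV : hs V0 -> eop V0) (YW' : hs V0 -> eop W0) :
  hcompatible_fam YW -> assoc_ax YU YW -> assoc_ax YV YW' ->
  forall u v a b t, YW u = YW' a -> YW v = YW' b ->
  YW (fun i => YU u v i t) = YW' (fun i => YV a b i t).
Proof.
move=> YWc YWa YW'a u v a b t ua vb; apply: eop_ext => w j s.
have [k adm] : exists k, admissible (YW u) (YW v) j.+1 k := YWc [:: u; v] j.+1.
have [N lbN] := adm w.
rewrite (YWa u v j.+1 k adm w N lbN j t s (ltnSn j)).
rewrite ua vb in adm lbN *.
by rewrite (YW'a a b j.+1 k adm w N lbN j t s (ltnSn j)).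
Qed.

(* The paper takes psi(u) = lim_{z -> 0} Y_V^U(u,z)1_V; reading off the
   z^0 coefficient needs no hypothesis on the negative powers of z. *)
Definition vacuum_coef (U0 V0 : lmodType CC) (YW : hs U0 -> eop V0)
    (oneV : hs V0) (u : hs U0) : hs V0 :=
  fun j => YW u oneV j 0.

Section Intertwining.
Variables (U0 V0 : lmodType CC) (YU : hs U0 -> eop U0).
Variables (YV : hs V0 -> eop V0) (oneV : hs V0) (YVU : hs U0 -> eop V0).
Hypotheses (YVlin : Ylinear YV) (YVUlin : Ylinear YVU).
Hypothesis YV_vacuum : forall v j, YV v oneV j 0 = v j.

Local Notation psi := (vacuum_coef YVU oneV).

Definition intertwines (u : hs U0) : Prop := YVU u = YV (psi u).

Lemma vacuum_coef_hlinear : hlinear psi.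
Proof. by case: YVUlin => [_ [YVUadd YVUsc]]; split => *; rewrite /vacuum_coef. Qed.

Lemma vacuum_coef_eq u a : YVU u = YV a -> psi u = a.
Proof.
by move=> ua; apply: functional_extensionality => j; rewrite /vacuum_coef ua.
Qed.

Lemma intertwinesP u a : YVU u = YV a -> intertwines u.
Proof. by move=> ua; rewrite /intertwines (vacuum_coef_eq ua). Qed.

Lemma intertwines_hsubmod : hsubmod intertwines.
Proof.
case: (YVlin) (YVUlin) => [_ [YVadd YVsc]] [_ [YVUadd YVUsc]].
split=> [|u u' iu iu'|c u iu].
- apply: (@intertwinesP _ (fun _ => 0)); apply: eop_ext => w j p.
  by rewrite !Ylinear0.
- apply: (@intertwinesP _ (hadd (psi u) (psi u'))); apply: eop_ext => w j p.
  by rewrite YVUadd YVadd iu iu'.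
- apply: (@intertwinesP _ (hsc c (psi u))); apply: eop_ext => w j p.
  by rewrite YVUsc YVsc iu.
Qed.

Lemma intertwines_hclosed : hclosed intertwines.
Proof.
move=> v approx; apply: eop_ext => w j p.
have [x [ix xv]] := approx j.+1.
rewrite -(Ylinear_congr_mod YVUlin _ _ xv (ltnSn j)) ix.
apply: (Ylinear_congr_mod YVlin) (ltnSn j) => i lt_ij.
exact: (Ylinear_congr_mod YVUlin _ _ xv lt_ij).
Qed.

Lemma intertwines_hsaturated : hsaturated intertwines.
Proof.
case: (YVlin) (YVUlin) => [_ [_ YVsc]] [_ [_ YVUsc]].
case: vacuum_coef_hlinear => [_ psi_sc].
move=> v n ihv; apply: eop_ext => w j p.
have := congr1 (fun f => f w (j + n)%N p) ihv.
have -> : psi (hsc (hpow n) v) = hsc (hpow n) (psi v).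
  exact: functional_extensionality.
by rewrite /= YVUsc YVsc !hsc_hpow leq_addl addnK.
Qed.

Hypotheses (YVc : hcompatible_fam YVU) (YVUa : assoc_ax YU YVU).
Hypothesis YVa : assoc_ax YV YV.

Lemma intertwines_product u v t :
  intertwines u -> intertwines v ->
  YVU (fun i => YU u v i t) = YV (fun i => YV (psi u) (psi v) i t).
Proof. exact: (assoc_ax_transport YVc YVUa YVa). Qed.

Lemma intertwines_nprod u v m :
  intertwines u -> intertwines v -> intertwines (nprod YU u m v).
Proof. by move=> iu iv; exact: intertwinesP (intertwines_product (- m - 1) iu iv). Qed.

Lemma vacuum_coef_product u v t :
  intertwines u -> intertwines v ->
  psi (fun i => YU u v i t) = fun i => YV (psi u) (psi v) i t.
Proof. by move=> iu iv; exact: vacuum_coef_eq (intertwines_product t iu iv). Qed.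

End Intertwining.

Theorem proposition3p8 (U0 V0 : lmodType CC)
    (YU : hs U0 -> eop U0) (oneU : hs U0)
    (YV : hs V0 -> eop V0) (oneV : hs V0)
    (S : hs U0 -> Prop) (YVU : hs U0 -> eop V0) (psi0 : hs U0 -> hs V0) :
  is_hNVA YU oneU ->
  is_hNVA YV oneV ->
  hsubmod S ->
  hgenerated YU oneU S ->
  is_hmodule YU oneU YVU ->
  (forall u j p, p < 0 -> YVU u oneV j p = 0) ->
  (forall s s' j, S s -> S s' -> psi0 (hadd s s') j = psi0 s j + psi0 s' j) ->
  (forall a s j, S s -> psi0 (hsc a s) j = hsc a (psi0 s) j) ->
  (forall s v j p, S s -> YVU s v j p = YV (psi0 s) v j p) ->
  exists psi : hs U0 -> hs V0,
    is_hNVA_hom YU oneU YV oneV psi /\ (forall s j, S s -> psi s j = psi0 s j).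
Proof.
move=> _ [[YVlin YV1] _ YVv0 _ YVa] _ Sgen [YVUlin YVU1 YVUc YVUa] _ _ _ YS.
have YVU1_YV1 : YVU oneU = YV oneV.
  by apply: eop_ext => w j p; rewrite YVU1 YV1.
have YS_eq s : S s -> YVU s = YV (psi0 s).
  by move=> Ss; apply: eop_ext => w j p; apply: YS.
have intertwines_all : forall u, intertwines YV oneV YVU u.
  apply: Sgen.
  - exact: intertwines_hsubmod.
  - exact: intertwines_hclosed.
  - exact: intertwines_hsaturated.
  - exact: intertwinesP YVU1_YV1.
  - by move=> s /YS_eq; apply: intertwinesP.
  - by move=> u v m; apply: intertwines_nprod.
exists (vacuum_coef YVU oneV); split.
- split.
  + exact: vacuum_coef_hlinear.
  + by move=> j; rewrite (vacuum_coef_eq YVv0 YVU1_YV1).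
  + move=> u v j p.
    by rewrite (vacuum_coef_product YVv0 YVUc YVUa YVa p (intertwines_all u)
                  (intertwines_all v)).
- by move=> s j /YS_eq /(vacuum_coef_eq YVv0) ->.
Qed.
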